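(* Let $I$ be a set, $\theta$ an infinite cardinal, $\mu$ a cardinal and $\varepsilon$ an ordinal with $\mu=\mu^{<\theta}>\varepsilon$ or $\theta>\varepsilon$. Let $D$ be a $\theta$-complete $(\mu,\theta)$-regular filter on $I$ (i.e. on the Boolean algebra $\mathscr P(I)$), let $T$ be an $\mathbb L_{\theta,\theta}(\tau)$-theory and $\Delta$ a set of conjunctions of fewer than $\theta$ atomic formulas of $\mathbb L_{\theta,\theta}(\tau)$. Then the following are equivalent: (B) $D$ is a $(\mu,\theta,\varepsilon!,\Delta,T)$-moral filter on $\mathscr P(I)$; (C) for every sequence $\langle M_s:s\in I\rangle$ of models of $T$, the reduced product $\prod_{s\in I}M_s/D$ is $(\mu^+,\theta,\varepsilon!,\Delta)$-saturated.
   Context: $D$ is $(\mu,\theta)$-regular if there are $w_s\in[\mu]^{<\theta}$ ($s\in I$) with $\{s\in I:\alpha\in w_s\}\in D$ for every $\alpha<\mu$. $\bar x_{[\varepsilon]}=\langle x_\zeta:\zeta<\varepsilon\rangle$; formulas of $\Delta$ are regarded as $\varphi(\bar x_{[\varepsilon]},\bar y)$ (dummy variables allowed). Moral filter: for a filter $D$ on a complete Boolean algebra $\mathfrak B$, a $D$-$(\mu,\theta,\varepsilon!,\Delta,T)$-problem is $\bar{\mathbf a}=\langle\mathbf a_u:u\in[\mu]^{<\theta}\rangle$ with $\mathbf a_u\in D$, $u\subseteq v\Rightarrow\mathbf a_v\le\mathbf a_u$, $\mathbf a_\emptyset=1$, such that for some sequence $\langle\varphi_\alpha(\bar x_{[\varepsilon]},\bar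 y_\alpha):\alpha<\mu\rangle$ of formulas from $\Delta$, for every nonzero $\mathbf a\in\mathfrak B$ and every $u\in[\mu]^{<\theta}$ there are $M\models T$ and tuples $\bar b_\alpha$ ($\alpha\in u$) in $M$ such that for every $v\subseteq u$: if $\mathbf a\le\mathbf a_v$ then $M\models\exists\bar x_{[\varepsilon]}\bigwedge_{\alpha\in v}\varphi_\alpha(\bar x_{[\varepsilon]},\bar b_\alpha)$, and if $\mathbf a\le 1-\mathbf a_v$ then $M\models\neg\exists\bar x_{[\varepsilon]}\bigwedge_{\alpha\in v}\varphi_\alpha(\bar x_{[\varepsilon]},\bar b_\alpha)$. A solution is $\bar{\mathbf b}=\langle\mathbf b_u:u\in[\mu]^{<\theta}\rangle$ with $\mathbf b_u\in D$, $\mathbf b_\emptyset=1$, $\mathbf b_u\le\mathbf a_u$, and $\mathbf b_u=\bigcap_{\alpha\in u}\mathbf b_{\{\alpha\}}$. $D$ is $(\mu,\theta,\varepsilon!,\Delta,T)$-moral if every such problem has a solution. A structure $N$ is $(\lambda,\theta,\varepsilon!,\Delta)$-saturated if every set $p$ of fewer than $\lambda$ formulas $\varphi(\bar x_{[\varepsilon]},\bar a)$ with $\varphi\in\Delta$, $\bar a$ from $N$, such that every subset of $p$ of size $<\theta$ is realized in $N$, is realized in $N$. *)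

From Stdlib Require Import IndefiniteDescription.

(** * Cardinal comparisons (cardinals are represented by types) *)
Definition le_card (A B : Type) : Prop :=
  exists f : A -> B, forall x y, f x = f y -> x = y.
Definition lt_card (A B : Type) : Prop := le_card A B /\ ~ le_card B A.

Definition small (Th : Type) {X : Type} (u : X -> Prop) : Prop :=
  lt_card {x : X | u x} Th.

Record vocab : Type := {
  fsym : Type; farity : fsym -> Type;
  rsym : Type; rarity : rsym -> Type }.

Inductive term (t : vocab) (X : Type) : Type :=
| tvar : X -> term t X
| tapp : forall f : fsym t, (farity t f -> term t X) -> term t X.

(** Formulas with free variables in [X]; [fex K phi] binds a block of
    variables indexed by [K] (the formula [phi] has variables [X + K]). *)
Inductive formula (t : vocab) : Type -> Type :=
| feq : forall X, term t X -> term t X -> formula t X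
| frel : forall X (r : rsym t), (rarity t r -> term t X) -> formula t X
| fneg : forall X, formula t X -> formula t X
| fand : forall X (K : Type), (K -> formula t X) -> formula t X
| fex : forall X (K : Type), formula t (X + K) -> formula t X.

Arguments tvar {t X} _.
Arguments tapp {t X} _ _.
Arguments feq {t X} _ _.
Arguments frel {t X} _ _.
Arguments fneg {t X} _.
Arguments fand {t X K} _.
Arguments fex {t X K} _.

Fixpoint term_in_L {t : vocab} (Th : Type) {X : Type} (u : term t X) : Prop :=
  match u with
  | tvar _ => True
  | tapp f args => lt_card (farity t f) Th /\ forall i, term_in_L Th (args i)
  end.

Fixpoint formula_in_L {t : vocab} (Th : Type) {X : Type} (phi : formula t X) : Prop :=
  match phi with
  | feq u1 u2 => term_in_L Th u1 /\ term_in_L Th u2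
  | @frel _ _ r args => lt_card (rarity t r) Th /\ forall i, term_in_L Th (args i)
  | fneg psi => formula_in_L Th psi
  | @fand _ _ K psis => lt_card K Th /\ forall k, formula_in_L Th (psis k)
  | @fex _ _ K psi => lt_card K Th /\ formula_in_L Th psi
  end.

Definition atomic {t : vocab} {X : Type} (phi : formula t X) : Prop :=
  match phi with
  | feq _ _ => True
  | frel _ _ => True
  | _ => False
  end.

Definition conj_atomic {t : vocab} (Th : Type) {X : Type} (phi : formula t X) : Prop :=
  atomic phi \/
  match phi with
  | @fand _ _ K psis => lt_card K Th /\ forall k, atomic (psis k)
  | _ => False
  end.

Record structure (t : vocab) : Type := {
  carrier :> Type;
  finterp : forall f : fsym t, (farity t f -> carrier) -> carrier;
  rinterp : forall r : rsym t, (rarity t r -> carrier) -> Prop }.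

Arguments carrier {t} _.
Arguments finterp {t} _ _ _.
Arguments rinterp {t} _ _ _.

Fixpoint eval {t : vocab} (M : structure t) {X : Type} (a : X -> M) (u : term t X) : M :=
  match u with
  | tvar x => a x
  | tapp f args => finterp M f (fun i => eval M a (args i))
  end.

Definition asg {M X K : Type} (a : X -> M) (b : K -> M) : X + K -> M :=
  fun z => match z with inl x => a x | inr k => b k end.

Fixpoint sat {t : vocab} (M : structure t) {X : Type} (phi : formula t X) : (X -> M) -> Prop :=
  match phi in formula _ X return (X -> M) -> Prop with
  | feq u1 u2 => fun a => eval M a u1 = eval M a u2
  | frel r args => fun a => rinterp M r (fun i => eval M a (args i))
  | fneg psi => fun a => ~ sat M psi a
  | fand psis => fun a => forall k, sat M (psis k) a
  | @fex _ _ K psi => fun a => exists b : K -> M, sat M psi (asg a b)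
  end.

Definition model {t : vocab} (T : formula t Empty_set -> Prop) (M : structure t) : Prop :=
  inhabited M /\ forall sigma, T sigma -> sat M sigma (fun e : Empty_set => match e with end).

(** Formulas phi(x_[eps], y): the x-variables are indexed by [E] (the ordinal
    eps), the y-variables by a type [Y] depending on the formula. *)
Definition dformula (t : vocab) (E : Type) : Type := {Y : Type & formula t (E + Y)}.

Definition dsat {t : vocab} (M : structure t) {E : Type} (phi : dformula t E)
  (c : E -> M) (b : projT1 phi -> M) : Prop :=
  sat M (projT2 phi) (asg c b).

Definition filter {I : Type} (D : (I -> Prop) -> Prop) : Prop :=
  D (fun _ => True) /\ ~ D (fun _ => False) /\
  (forall A B : I -> Prop, D A -> (forall s, A s -> B s) -> D B) /\
  (forall A B : I -> Prop, D A -> D B -> D (fun s => A s /\ B s)).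

Definition complete (Th : Type) {I : Type} (D : (I -> Prop) -> Prop) : Prop :=
  forall K : Type, lt_card K Th ->
  forall A : K -> I -> Prop, (forall k, D (A k)) -> D (fun s => forall k, A k s).

Definition regular (Mu Th : Type) {I : Type} (D : (I -> Prop) -> Prop) : Prop :=
  exists w : I -> Mu -> Prop,
    (forall s, small Th (w s)) /\ forall al : Mu, D (fun s => w s al).

(** a D-(mu,theta,eps!,Delta,T)-problem; index set [mu]^{<theta} is the set of
    small [u : Mu -> Prop] *)
Definition moral_problem {t : vocab} (Th Mu E : Type) (Delta : dformula t E -> Prop)
  (T : formula t Empty_set -> Prop) {I : Type} (D : (I -> Prop) -> Prop)
  (a : (Mu -> Prop) -> I -> Prop) : Prop :=
  (forall u, small Th u -> D (a u)) /\
  (forall u v : Mu -> Prop, small Th u -> small Th v -> (forall x, u x -> v x) ->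
     forall s, a v s -> a u s) /\
  (forall s, a (fun _ => False) s) /\
  exists phi : Mu -> dformula t E,
    (forall al, Delta (phi al)) /\
    forall A : I -> Prop, (exists s, A s) ->
    forall u : Mu -> Prop, small Th u ->
    exists (M : structure t) (b : forall al, projT1 (phi al) -> M),
      model T M /\
      forall v : Mu -> Prop, (forall x, v x -> u x) ->
        ((forall s, A s -> a v s) ->
           exists c : E -> M, forall al, v al -> dsat M (phi al) c (b al)) /\
        ((forall s, A s -> ~ a v s) ->
           ~ exists c : E -> M, forall al, v al -> dsat M (phi al) c (b al)).

Definition moral_solution (Th Mu : Type) {I : Type} (D : (I -> Prop) -> Prop)
  (a b : (Mu -> Prop) -> I -> Prop) : Prop :=
  (forall u, small Th u -> D (b u)) /\
  (forall s, b (fun _ => False) s) /\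
  (forall u, small Th u -> forall s, b u s -> a u s) /\
  (forall u, small Th u -> forall s, b u s <-> forall al, u al -> b (fun x => x = al) s).

Definition moral {t : vocab} (Th Mu E : Type) (Delta : dformula t E -> Prop)
  (T : formula t Empty_set -> Prop) {I : Type} (D : (I -> Prop) -> Prop) : Prop :=
  forall a, moral_problem Th Mu E Delta T D a -> exists b, moral_solution Th Mu D a b.

Definition rp_rel {I : Type} (D : (I -> Prop) -> Prop) (Ms : I -> Type)
  (f g : forall s, Ms s) : Prop := D (fun s => f s = g s).

Definition rp_carrier {I : Type} (D : (I -> Prop) -> Prop) (Ms : I -> Type) : Type :=
  {P : (forall s, Ms s) -> Prop | exists f, P = rp_rel D Ms f}.

Definition rp_class {I : Type} (D : (I -> Prop) -> Prop) (Ms : I -> Type)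
  (f : forall s, Ms s) : rp_carrier D Ms :=
  exist _ (rp_rel D Ms f) (ex_intro _ f eq_refl).

Definition rp_rep {I : Type} {D : (I -> Prop) -> Prop} {Ms : I -> Type}
  (c : rp_carrier D Ms) : forall s, Ms s :=
  proj1_sig (constructive_indefinite_description _ (proj2_sig c)).

Definition redprod {t : vocab} {I : Type} (D : (I -> Prop) -> Prop)
  (Ms : I -> structure t) : structure t :=
  {| carrier := rp_carrier D (fun s => carrier (Ms s));
     finterp := fun f args =>
       rp_class D (fun s => carrier (Ms s))
         (fun s => finterp (Ms s) f (fun i => rp_rep (args i) s));
     rinterp := fun r args =>
       D (fun s => rinterp (Ms s) r (fun i => rp_rep (args i) s)) |}.

(** * (mu^+, theta, eps!, Delta)-saturation: sets of fewer than mu^+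
    (i.e. at most mu) Delta-formulas with parameters, represented as families
    indexed by [K] with |K| <= mu. *)
Definition saturated_succ {t : vocab} (Mu Th : Type) {E : Type}
  (Delta : dformula t E -> Prop) (N : structure t) : Prop :=
  forall (K : Type) (phi : K -> dformula t E) (pars : forall k, projT1 (phi k) -> N),
    le_card K Mu -> (forall k, Delta (phi k)) ->
    (forall J : K -> Prop, small Th J ->
       exists c : E -> N, forall k, J k -> dsat N (phi k) c (pars k)) ->
    exists c : E -> N, forall k, dsat N (phi k) c (pars k).

(** Both directions are Łoś's theorem for the formulas in Delta, which are
    conjunctions of fewer than theta atomic formulas and hence are evaluated
    coordinatewise in a theta-complete reduced product.

    (B) => (C): a type p = {phi_al(x, pars_al) : al < mu} over the reduced
    product gives the moral problem a_u = {s : the u-part of p is realized in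
    M_s}.  A multiplicative solution b lets each s realize, in M_s, the part of
    p indexed by {al in w_s : s in b_al}, and these local realizations glue to
    a realization of p.

    (C) => (B): from a moral problem take, for each s, the model M_s and
    parameters witnessing it on w_s.  The associated type over the reduced
    product is (<theta)-satisfiable, and a realization c yields the solution
    b_u = {s : u is included in w_s and c(s) satisfies the u-part in M_s}. *)
From Stdlib Require Import Classical ClassicalEpsilon IndefiniteDescription
  FunctionalExtensionality PropExtensionality ProofIrrelevance.

Lemma le_card_trans A B C : le_card A B -> le_card B C -> le_card A C.
Proof. intros [f Hf] [g Hg]. exists (fun x => g (f x)). auto. Qed.

Lemma le_lt_card_trans A B C : le_card A B -> lt_card B C -> lt_card A C.
Proof.
  intros HAB [HBC HCB]. split; [eapply le_card_trans; eauto|].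
  intro HCA. apply HCB. eapply le_card_trans; eauto.
Qed.

Lemma small_subset Th X (u v : X -> Prop) :
  (forall x, u x -> v x) -> small Th v -> small Th u.
Proof.
  intros Huv. apply le_lt_card_trans.
  exists (fun p => exist v (proj1_sig p) (Huv _ (proj2_sig p))).
  intros [x hx] [y hy] Hxy. injection Hxy. apply subset_eq_compat.
Qed.

Lemma small_False Th X : le_card nat Th -> small Th (fun _ : X => False).
Proof.
  intros [f _]. split.
  - exists (fun p : {x : X | False} => match proj2_sig p with end). intros [x []].
  - intros [g _]. destruct (g (f 0)) as [x []].
Qed.

Lemma small_eq1 Th X (x0 : X) : le_card nat Th -> small Th (fun x => x = x0).
Proof.
  intros [f Hf]. split.
  - exists (fun _ => f 0). intros [x ->] [y ->] _. reflexivity.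
  - intros [g Hg].
    assert (Hg01 : g (f 0) = g (f 1)).
    { destruct (g (f 0)) as [x ->], (g (f 1)) as [y ->]. reflexivity. }
    discriminate (Hf _ _ (Hg _ _ Hg01)).
Qed.

Lemma small_image Th A B (h : A -> B) (u : A -> Prop) :
  small Th u -> small Th (fun y => exists x, u x /\ h x = y).
Proof.
  apply le_lt_card_trans.
  exists (fun p => let q := constructive_indefinite_description _ (proj2_sig p) in
                   exist u (proj1_sig q) (proj1 (proj2_sig q))).
  intros [y hy] [y' hy'] Heq; simpl in Heq.
  destruct (constructive_indefinite_description _ hy) as [x [Hux Hx]].
  destruct (constructive_indefinite_description _ hy') as [x' [Hux' Hx']].
  injection Heq as <-. subst. apply subset_eq_compat. reflexivity.
Qed.

Lemma dependent_functional_choice {I : Type} {A : I -> Type} (Q : forall s, A s -> Prop) :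
  (forall s, exists x, Q s x) -> exists f : forall s, A s, forall s, Q s (f s).
Proof.
  intro HQ.
  exists (fun s => proj1_sig (constructive_indefinite_description _ (HQ s))).
  intro s. exact (proj2_sig (constructive_indefinite_description _ (HQ s))).
Qed.

Lemma partial_choice {I : Type} {A : I -> Type} (P : I -> Prop) (Q : forall s, A s -> Prop) :
  (forall s, inhabited (A s)) -> (forall s, P s -> exists x, Q s x) ->
  exists f : forall s, A s, forall s, P s -> Q s (f s).
Proof.
  intros Hinh HPQ. apply (dependent_functional_choice (fun s x => P s -> Q s x)). intro s.
  destruct (classic (P s)) as [HP|HnP].
  - destruct (HPQ s HP) as [x Hx]. eauto.
  - destruct (Hinh s) as [x]. exists x. contradiction.
Qed.

Lemma model_assignments_inhabited {t : vocab} (T : formula t Empty_set -> Prop)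
  (M : structure t) (X : Type) :
  model T M -> inhabited (X -> M).
Proof. intros [[m] _]. exact (inhabits (fun _ => m)). Qed.

Section Filters.

Variables (I : Type) (D : (I -> Prop) -> Prop).
Hypothesis HF : filter D.

Lemma filter_mono (A B : I -> Prop) : D A -> (forall s, A s -> B s) -> D B.
Proof. apply HF. Qed.

Lemma filter_and (A B : I -> Prop) : D A -> D B -> D (fun s => A s /\ B s).
Proof. apply HF. Qed.

Lemma filter_all (A : I -> Prop) : (forall s, A s) -> D A.
Proof. intro HA. apply (filter_mono (fun _ => True)); auto. apply HF. Qed.

Lemma complete_small Th X (u : X -> Prop) (P : X -> I -> Prop) :
  complete Th D -> small Th u -> (forall x, u x -> D (P x)) ->
  D (fun s => forall x, u x -> P x s).
Proof.
  intros HC Hu HP.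
  apply (filter_mono _ _ (HC _ Hu (fun p => P (proj1_sig p)) (fun p => HP _ (proj2_sig p)))).
  intros s Hs x Hx. exact (Hs (exist _ x Hx)).
Qed.

End Filters.

Arguments filter_mono {I D} HF {A B}.
Arguments filter_and {I D} HF {A B}.
Arguments filter_all {I D} HF {A}.
Arguments complete_small {I D} HF {Th X u} P HC Hu HP.

Section ReducedProduct.

Variables (t : vocab) (I : Type) (D : (I -> Prop) -> Prop) (Ms : I -> structure t).
Hypothesis HF : filter D.

Definition rp_lift {X : Type} (g : forall s, X -> Ms s) : X -> redprod D Ms :=
  fun x => rp_class D (fun s => carrier (Ms s)) (fun s => g s x).

Definition rp_agree {X : Type} (a : X -> redprod D Ms) (g : forall s, X -> Ms s) : Prop :=
  forall x, D (fun s => rp_rep (a x) s = g s x).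

Lemma rp_rel_rep (c : redprod D Ms) : proj1_sig c = rp_rel D _ (rp_rep c).
Proof.
  unfold rp_rep.
  destruct (constructive_indefinite_description _ (proj2_sig c)) as [g Hg].
  exact Hg.
Qed.

Lemma rp_rep_class (f : forall s, Ms s) :
  D (fun s => rp_rep (rp_class D (fun s => carrier (Ms s)) f) s = f s).
Proof.
  assert (Hff : rp_rel D _ f f) by (apply (filter_all HF); auto).
  pose proof (rp_rel_rep (rp_class D _ f)) as Hclass. simpl in Hclass.
  rewrite Hclass in Hff. exact Hff.
Qed.

Lemma rp_eq (c d : redprod D Ms) : D (fun s => rp_rep c s = rp_rep d s) -> c = d.
Proof.
  intro Hcd.
  assert (Hcd' : proj1_sig c = proj1_sig d).
  { rewrite (rp_rel_rep c), (rp_rel_rep d).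
    apply functional_extensionality. intro g. apply propositional_extensionality.
    unfold rp_rel. split; intro Hg;
      apply (filter_mono HF (filter_and HF Hcd Hg)); intros s [e1 e2]; congruence. }
  destruct c as [P hP], d as [Q hQ]. simpl in Hcd'. subst.
  f_equal. apply proof_irrelevance.
Qed.

Lemma rp_agree_rep {X : Type} (a : X -> redprod D Ms) :
  rp_agree a (fun s x => rp_rep (a x) s).
Proof. intro x. apply (filter_all HF); auto. Qed.

Lemma rp_agree_lift {X : Type} (g : forall s, X -> Ms s) : rp_agree (rp_lift g) g.
Proof. intro x. apply rp_rep_class. Qed.

Lemma rp_agree_asg {X Y : Type} (a : X -> redprod D Ms) (b : Y -> redprod D Ms)
  (g : forall s, X -> Ms s) (h : forall s, Y -> Ms s) :
  rp_agree a g -> rp_agree b h -> rp_agree (asg a b) (fun s => asg (g s) (h s)).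
Proof. intros Hag Hbh [x|y]; simpl; auto. Qed.

Variable Th : Type.
Hypothesis HC : complete Th D.

Lemma eval_redprod {X : Type} (u : term t X) (a : X -> redprod D Ms) (g : forall s, X -> Ms s) :
  term_in_L Th u -> rp_agree a g ->
  D (fun s => rp_rep (eval (redprod D Ms) a u) s = eval (Ms s) (g s) u).
Proof.
  intros Hu Hag. induction u as [x|f args IH]; simpl.
  - apply Hag.
  - destruct Hu as [Hf Hargs].
    apply (filter_mono HF (filter_and HF
             (HC _ Hf _ (fun i => IH i (Hargs i)))
             (rp_rep_class (fun s => finterp (Ms s) f
                              (fun i => rp_rep (eval (redprod D Ms) a (args i)) s))))).
    intros s [Hargs_s ->]. f_equal. apply functional_extensionality. exact Hargs_s.
Qed.

Lemma sat_atomic_redprod {X : Type} (phi : formula t X) (a : X -> redprod D Ms)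
  (g : forall s, X -> Ms s) :
  atomic phi -> formula_in_L Th phi -> rp_agree a g ->
  (sat (redprod D Ms) phi a <-> D (fun s => sat (Ms s) phi (g s))).
Proof.
  intros Hat HL Hag. destruct phi; simpl in *; try contradiction.
  - destruct HL as [H0 H1].
    pose proof (filter_and HF (eval_redprod t0 a g H0 Hag)
                  (eval_redprod t1 a g H1 Hag)) as Hev.
    split.
    + intros Heq. rewrite Heq in Hev.
      apply (filter_mono HF Hev). intros s [e0 e1]. congruence.
    + intros Heq. apply rp_eq.
      apply (filter_mono HF (filter_and HF Heq Hev)).
      intros s [e [e0 e1]]. congruence.
  - destruct HL as [Hr Hargs].
    assert (Hev : D (fun s => (fun i => rp_rep (eval (redprod D Ms) a (t0 i)) s)
                              = (fun i => eval (Ms s) (g s) (t0 i)))).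
    { apply (filter_mono HF (HC _ Hr _ (fun i => eval_redprod (t0 i) a g (Hargs i) Hag))).
      intros s Hs. apply functional_extensionality. exact Hs. }
    split; intro Hrel; apply (filter_mono HF (filter_and HF Hrel Hev));
      intros s [Hrel_s e]; simpl in *; congruence.
Qed.

Lemma sat_conj_atomic_redprod {X : Type} (phi : formula t X) (a : X -> redprod D Ms)
  (g : forall s, X -> Ms s) :
  conj_atomic Th phi -> formula_in_L Th phi -> rp_agree a g ->
  (sat (redprod D Ms) phi a <-> D (fun s => sat (Ms s) phi (g s))).
Proof.
  intros [Hat|Hconj] HL Hag; [now apply sat_atomic_redprod|].
  destruct phi; simpl in *; try contradiction.
  destruct Hconj as [HK Hat], HL as [_ HL]. split.
  - intro Hsat. apply (HC _ HK (fun k s => sat (Ms s) (f k) (g s))).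
    intro k. apply (sat_atomic_redprod (f k) a g); auto.
  - intros Hsat k. apply (sat_atomic_redprod (f k) a g); auto.
    apply (filter_mono HF Hsat). auto.
Qed.

Lemma dsat_redprod {E : Type} (phi : dformula t E) (c : E -> redprod D Ms)
  (b : projT1 phi -> redprod D Ms) (cs : forall s, E -> Ms s) (bs : forall s, projT1 phi -> Ms s) :
  formula_in_L Th (projT2 phi) -> conj_atomic Th (projT2 phi) ->
  rp_agree c cs -> rp_agree b bs ->
  (dsat (redprod D Ms) phi c b <-> D (fun s => dsat (Ms s) phi (cs s) (bs s))).
Proof.
  intros HL Hconj Hc Hb. apply sat_conj_atomic_redprod; auto. now apply rp_agree_asg.
Qed.

End ReducedProduct.

Arguments rp_lift {t I} D Ms {X} g.

Lemma saturated_succ_of_indexed {t : vocab} (Mu Th E : Type) (Delta : dformula t E -> Prop)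
  (N : structure t) :
  le_card nat Th ->
  (forall (phi : Mu -> dformula t E) (pars : forall al, projT1 (phi al) -> N),
     (forall al, Delta (phi al)) ->
     (forall J, small Th J -> exists c : E -> N, forall al, J al -> dsat N (phi al) c (pars al)) ->
     exists c : E -> N, forall al, dsat N (phi al) c (pars al)) ->
  saturated_succ Mu Th Delta N.
Proof.
  intros Hnat Hsat K phi pars [g Hg] HDelta Hfin.
  destruct (classic (inhabited K)) as [[k0]|HK].
  - set (h := fun al => epsilon (inhabits k0) (fun k => g k = al)).
    assert (Hhg : forall k, h (g k) = k).
    { intro k. apply Hg. apply (epsilon_spec (inhabits k0) (fun k' => g k' = g k)). eauto. }
    destruct (Hsat (fun al => phi (h al)) (fun al => pars (h al))) as [c Hc]; auto.
    + intros J HJ. destruct (Hfin _ (small_image _ _ _ h J HJ)) as [c Hc].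
      exists c. intros al Hal. apply Hc. eauto.
    + exists c. intro k. specialize (Hc (g k)). rewrite Hhg in Hc. exact Hc.
  - destruct (Hfin _ (small_False _ K Hnat)) as [c _].
    exists c. intro k. exfalso. exact (HK (inhabits k)).
Qed.

Section MoralSaturated.

Variables (t : vocab) (Th Mu E : Type) (Delta : dformula t E -> Prop)
  (T : formula t Empty_set -> Prop) (I : Type) (D : (I -> Prop) -> Prop) (w : I -> Mu -> Prop).
Hypothesis Hnat : le_card nat Th.
Hypothesis HF : filter D.
Hypothesis HC : complete Th D.
Hypothesis Hw : forall s, small Th (w s).
Hypothesis HwD : forall al, D (fun s => w s al).
Hypothesis HDelta : forall phi, Delta phi ->
  formula_in_L Th (projT2 phi) /\ conj_atomic Th (projT2 phi).

Section Realization.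

Variables (Ms : I -> structure t) (phi : Mu -> dformula t E)
  (pars : forall al, projT1 (phi al) -> redprod D Ms).
Hypothesis HMs : forall s, model T (Ms s).
Hypothesis Hphi : forall al, Delta (phi al).

Definition type_problem : (Mu -> Prop) -> I -> Prop :=
  fun u s => exists c : E -> Ms s,
    forall al, u al -> dsat (Ms s) (phi al) c (fun y => rp_rep (pars al y) s).

Lemma type_problem_moral_problem :
  (forall J, small Th J ->
     exists c, forall al, J al -> dsat (redprod D Ms) (phi al) c (pars al)) ->
  moral_problem Th Mu E Delta T D type_problem.
Proof.
  intro Hfin. split; [|split; [|split]].
  - intros u Hu. destruct (Hfin u Hu) as [c Hc].
    refine (filter_mono HF
             (complete_small HF (fun al s => dsat (Ms s) (phi al)
                (fun e => rp_rep (c e) s) (fun y => rp_rep (pars al y) s)) HC Hu _) _).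
    + intros al Hal. destruct (HDelta _ (Hphi al)) as [HL Hconj].
      apply (dsat_redprod _ _ _ _ HF Th HC (phi al) c (pars al)); auto using rp_agree_rep.
    + intros s Hs. exists (fun e => rp_rep (c e) s). exact Hs.
  - intros u v _ _ Huv s [c Hc]. exists c. auto.
  - intro s. destruct (model_assignments_inhabited T (Ms s) E (HMs s)) as [c].
    exists c. contradiction.
  - exists phi. split; [exact Hphi|].
    intros A [s Hs] u _. exists (Ms s), (fun al y => rp_rep (pars al y) s).
    split; [apply HMs|]. intros v _. split.
    + intro Hv. exact (Hv s Hs).
    + intros Hv Hc. exact (Hv s Hs Hc).
Qed.

Lemma realized_of_moral_solution (b : (Mu -> Prop) -> I -> Prop) :
  moral_solution Th Mu D type_problem b ->
  exists c, forall al, dsat (redprod D Ms) (phi al) c (pars al).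
Proof.
  intros [Hb_big [_ [Hb_sub Hb_mult]]].
  assert (Hlocal : forall s, exists c : E -> Ms s, forall al,
             w s al /\ b (fun x => x = al) s -> dsat (Ms s) (phi al) c (fun y => rp_rep (pars al y) s)).
  { intro s.
    set (u := fun al => w s al /\ b (fun x => x = al) s).
    assert (Hu : small Th u) by (apply (small_subset _ _ _ (w s)); [firstorder|apply Hw]).
    apply (Hb_sub u Hu s), (Hb_mult u Hu s). firstorder. }
  destruct (dependent_functional_choice _ Hlocal) as [cs Hcs].
  exists (rp_lift D Ms cs). intro al. destruct (HDelta _ (Hphi al)) as [HL Hconj].
  apply (dsat_redprod _ _ _ _ HF Th HC _ _ _ cs (fun s y => rp_rep (pars al y) s));
    auto using rp_agree_lift, rp_agree_rep.
  apply (filter_mono HF (filter_and HF (HwD al) (Hb_big _ (small_eq1 _ _ al Hnat)))).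
  intros s Hs. exact (Hcs s al Hs).
Qed.

End Realization.

Lemma saturated_of_moral : moral Th Mu E Delta T D ->
  forall Ms : I -> structure t, (forall s, model T (Ms s)) ->
  saturated_succ Mu Th Delta (redprod D Ms).
Proof.
  intros Hmoral Ms HMs. apply saturated_succ_of_indexed; [exact Hnat|].
  intros phi pars Hphi Hfin.
  destruct (Hmoral _ (type_problem_moral_problem Ms phi pars HMs Hphi Hfin)) as [b Hb].
  exact (realized_of_moral_solution Ms phi pars Hphi b Hb).
Qed.

Section Solution.

Variables (a : (Mu -> Prop) -> I -> Prop) (phi : Mu -> dformula t E)
  (Ms : I -> structure t) (bs : forall s al, projT1 (phi al) -> Ms s).
Hypothesis HMs : forall s, model T (Ms s).
Hypothesis Hphi : forall al, Delta (phi al).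
Hypothesis Ha_big : forall u, small Th u -> D (a u).
Hypothesis Ha_pos : forall s v, (forall al, v al -> w s al) -> a v s ->
  exists c : E -> Ms s, forall al, v al -> dsat (Ms s) (phi al) c (bs s al).
Hypothesis Ha_neg : forall s v, (forall al, v al -> w s al) ->
  (exists c : E -> Ms s, forall al, v al -> dsat (Ms s) (phi al) c (bs s al)) -> a v s.

Lemma problem_type_small_realized J : small Th J ->
  exists c, forall al, J al ->
    dsat (redprod D Ms) (phi al) c (rp_lift D Ms (fun s => bs s al)).
Proof.
  intro HJ.
  assert (Hgood : D (fun s => (forall al, J al -> w s al) /\ a J s)).
  { apply (filter_and HF); auto. apply (complete_small HF _ HC); auto. }
  destruct (partial_choice _ _ (fun s => model_assignments_inhabited T _ E (HMs s))
              (fun s (Hs : (forall al, J al -> w s al) /\ a J s) => Ha_pos s J (proj1 Hs) (proj2 Hs)))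
    as [cs Hcs].
  exists (rp_lift D Ms cs). intros al Hal. destruct (HDelta _ (Hphi al)) as [HL Hconj].
  apply (dsat_redprod _ _ _ _ HF Th HC _ _ _ cs (fun s => bs s al)); auto using rp_agree_lift.
  apply (filter_mono HF Hgood). intros s Hs. exact (Hcs s Hs al Hal).
Qed.

Lemma moral_solution_of_realization (c : E -> redprod D Ms) :
  (forall al, dsat (redprod D Ms) (phi al) c (rp_lift D Ms (fun s => bs s al))) ->
  moral_solution Th Mu D a (fun u s => forall al, u al ->
    w s al /\ dsat (Ms s) (phi al) (fun e => rp_rep (c e) s) (bs s al)).
Proof.
  intro Hc. split; [|split; [|split]].
  - intros u Hu. apply (complete_small HF _ HC); auto.
    intros al _. apply (filter_and HF); auto. destruct (HDelta _ (Hphi al)) as [HL Hconj].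
    apply (dsat_redprod _ _ _ _ HF Th HC (phi al) c (rp_lift D Ms (fun s => bs s al)));
      auto using rp_agree_lift, rp_agree_rep.
  - intros s al [].
  - intros u _ s Hs. apply Ha_neg; [firstorder|].
    exists (fun e => rp_rep (c e) s). firstorder.
  - intros u _ s. split.
    + intros Hs al Hal x ->. auto.
    + intros Hs al Hal. exact (Hs al Hal al eq_refl).
Qed.

End Solution.

Lemma moral_problem_local_models (a : (Mu -> Prop) -> I -> Prop) :
  moral_problem Th Mu E Delta T D a ->
  exists phi : Mu -> dformula t E, (forall al, Delta (phi al)) /\
    forall s, exists p : {M : structure t & forall al, projT1 (phi al) -> M},
      model T (projT1 p) /\ forall v, (forall al, v al -> w s al) ->
        (a v s -> exists c, forall al, v al -> dsat (projT1 p) (phi al) c (projT2 p al)) /\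
        ((exists c, forall al, v al -> dsat (projT1 p) (phi al) c (projT2 p al)) -> a v s).
Proof.
  intros [_ [_ [_ [phi [Hphi Hprob]]]]]. exists phi. split; [exact Hphi|].
  intro s. destruct (Hprob (fun s' => s' = s) (ex_intro _ s eq_refl) (w s) (Hw s))
    as [M [b [HM Hb]]].
  exists (existT _ M b). split; [exact HM|]. intros v Hv. split.
  - intro Has. apply (Hb v Hv). now intros s' ->.
  - intro Hex. apply NNPP. intro Hnas. apply (Hb v Hv); [now intros s' ->|exact Hex].
Qed.

Lemma moral_of_saturated :
  (forall Ms : I -> structure t, (forall s, model T (Ms s)) ->
     saturated_succ Mu Th Delta (redprod D Ms)) ->
  moral Th Mu E Delta T D.
Proof.
  intros Hsat a Ha.
  destruct (moral_problem_local_models a Ha) as [phi [Hphi Hlocal]].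
  destruct (functional_choice _ Hlocal) as [loc Hloc].
  set (Ms := fun s => projT1 (loc s)). set (bs := fun s => projT2 (loc s)).
  assert (HMs : forall s, model T (Ms s)) by (intro s; apply Hloc).
  destruct (Hsat Ms HMs Mu phi (fun al => rp_lift D Ms (fun s => bs s al))
              (ex_intro _ (fun x => x) (fun x y H => H)) Hphi
              (problem_type_small_realized a phi Ms bs HMs Hphi (proj1 Ha)
                 (fun s v Hv => proj1 (proj2 (Hloc s) v Hv))))
    as [c Hc].
  eexists. exact (moral_solution_of_realization a phi Ms bs Hphi
                    (fun s v Hv => proj2 (proj2 (Hloc s) v Hv)) c Hc).
Qed.

End MoralSaturated.

Theorem claim3p6 (t : vocab) (I Th Mu E : Type) (D : (I -> Prop) -> Prop)
  (T : formula t Empty_set -> Prop) (Delta : dformula t E -> Prop) :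
  le_card nat Th ->
  ((forall K : Type, lt_card K Th -> le_card (K -> Mu) Mu) /\ lt_card E Mu
   \/ lt_card E Th) ->
  filter D -> complete Th D -> regular Mu Th D ->
  (forall sigma, T sigma -> formula_in_L Th sigma) ->
  (forall phi, Delta phi -> formula_in_L Th (projT2 phi) /\ conj_atomic Th (projT2 phi)) ->
  (moral Th Mu E Delta T D <->
   forall Ms : I -> structure t, (forall s, model T (Ms s)) ->
     saturated_succ Mu Th Delta (redprod D Ms)).
Proof.
  intros Hnat _ HF HC [w [Hw HwD]] _ HDelta. split.
  - now apply (saturated_of_moral t Th Mu E Delta T I D w).
  - now apply (moral_of_saturated t Th Mu E Delta T I D w).
Qed.
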